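(* Let $L$ be a Lie algebra over a field $K$, and let $\varphi: L \to L$ be a linear map. Then $\varphi$ is a Hom-Lie structure on $L$ if and only if the bilinear map $F_\varphi: L \times L \to L$ defined by $$F_\varphi(x,y) = [\varphi(x),y] + [x,\varphi(y)]$$ satisfies $$[F_\varphi(x,y),z] + [F_\varphi(z,x),y] + [F_\varphi(y,z),x] = 0$$ for all $x,y,z \in L$.
   Context: A Hom-Lie structure on a Lie algebra $L$ is a linear map $\varphi: L \to L$ satisfying the Hom-Jacobi equation $[[x,y],\varphi(z)] + [[z,x],\varphi(y)] + [[y,z],\varphi(x)] = 0$ for all $x,y,z \in L$. *)

From HB Require Import structures.
From mathcomp Require Import all_boot all_order all_algebra.
Set Implicit Arguments. Unset Strict Implicit. Unset Printing Implicit Defensive.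
Import GRing.Theory.
Local Open Scope ring_scope.

Definition is_lie_bracket (K : fieldType) (L : lmodType K) (br : L -> L -> L) : Prop :=
  [/\ (forall (a : K) (x y z : L), br (a *: x + y) z = a *: br x z + br y z),
      (forall (a : K) (x y z : L), br x (a *: y + z) = a *: br x y + br x z),
      (forall x : L, br x x = 0) &
      (forall x y z : L, br x (br y z) + br y (br z x) + br z (br x y) = 0)].

Definition hom_lie_structure (K : fieldType) (L : lmodType K) (br : L -> L -> L)
  (phi : {linear L -> L}) : Prop :=
  forall x y z : L,
    br (br x y) (phi z) + br (br z x) (phi y) + br (br y z) (phi x) = 0.

Definition Fphi (K : fieldType) (L : lmodType K) (br : L -> L -> L)
  (phi : L -> L) (x y : L) : L := br (phi x) y + br x (phi y).

(** Expanding [F_phi] by additivity, the nine terms of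
    [[F x y, z] + [F z x, y] + [F y z, x] + [[x, y], phi z] + [[z, x], phi y] + [[y, z], phi x]]
    regroup into the three Jacobi sums for [(phi x, y, z)], [(phi y, z, x)] and
    [(phi z, x, y)]. Hence the cyclic sum of [F_phi] is the opposite of the
    Hom-Jacobi sum, and one vanishes identically iff the other does. *)

From mathcomp Require Import all_boot all_order all_algebra.
Set Implicit Arguments. Unset Strict Implicit. Unset Printing Implicit Defensive.
Local Open Scope ring_scope.
Import GRing.Theory.

Section LieBracket.

Variables (K : fieldType) (L : lmodType K) (br : L -> L -> L).
Hypothesis hL : is_lie_bracket br.

Lemma lie_bracketDl (x y z : L) : br (x + y) z = br x z + br y z.
Proof. by case: hL => linl _ _ _; have := linl 1 x y z; rewrite !scale1r. Qed.

Lemma lie_bracketDr (x y z : L) : br x (y + z) = br x y + br x z.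
Proof. by case: hL => _ linr _ _; have := linr 1 x y z; rewrite !scale1r. Qed.

Lemma lie_bracketC (x y : L) : br x y = - br y x.
Proof.
case: hL => _ _ alt _; apply/eqP; rewrite -subr_eq0 opprK; apply/eqP.
by have := alt (x + y); rewrite lie_bracketDl !lie_bracketDr !alt add0r addr0.
Qed.

Lemma lie_jacobi_left (a b c : L) :
  br (br a b) c + br (br b c) a + br (br c a) b = 0.
Proof.
case: hL => _ _ _ jac; rewrite !(lie_bracketC (br _ _)).
by apply/eqP; rewrite -oppr_eq0 !opprD !opprK -addrA addrC jac.
Qed.

Lemma Fphi_cyclic_sum_add_hom_jacobi (phi : L -> L) (x y z : L) :
  br (Fphi br phi x y) z + br (Fphi br phi z x) y + br (Fphi br phi y z) x
  + (br (br x y) (phi z) + br (br z x) (phi y) + br (br y z) (phi x)) = 0.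
Proof.
have jacobi_sum :
    (br (br (phi x) y) z + br (br y z) (phi x) + br (br z (phi x)) y)
  + (br (br (phi y) z) x + br (br z x) (phi y) + br (br x (phi y)) z)
  + (br (br (phi z) x) y + br (br x y) (phi z) + br (br y (phi z)) x) = 0.
  by rewrite !lie_jacobi_left !addr0.
rewrite -[RHS]jacobi_sum /Fphi !lie_bracketDl.
by rewrite (AC (((2*2)*2)*(2*1)) (((1*9)*4)*((5*8)*2)*((3*7)*6))).
Qed.

End LieBracket.

Theorem lemma1p1 (K : fieldType) (L : lmodType K) (br : L -> L -> L)
  (hL : is_lie_bracket br) (phi : {linear L -> L}) :
  hom_lie_structure br phi <->
  (forall x y z : L,
     br (Fphi br phi x y) z + br (Fphi br phi z x) y + br (Fphi br phi y z) x = 0).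
Proof.
split=> H x y z; have := Fphi_cyclic_sum_add_hom_jacobi hL phi x y z.
- by rewrite H addr0.
- by rewrite H add0r.
Qed.
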